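(* Let $(\mathcal Q,d)$ be a Hadamard space, let $Y$ be a $\mathcal Q$-valued random variable, let $o\in\mathcal Q$, and let $\tau\in\mathcal S_0^+$. Assume $\mathbb E[\tau'(d(Y,o))]<\infty$. Let $m\in\arg\min_{q\in\mathcal Q}\mathbb E[\tau(d(Y,q))-\tau(d(Y,o))]$ and let $q\in\mathcal Q\setminus\{m\}$. Then $$\mathbb E\big[\tau(d(Y,q))-\tau(d(Y,m))\big]\ \ge\ \tfrac12\, d(q,m)^2\,\mathbb E\Big[\tau'^{\oplus}\big(\max(d(Y,m),d(Y,q))\big)\Big].$$
   Context: $\mathcal S$ denotes the set of nondecreasing convex functions $\tau:[0,\infty)\to\mathbb R$ that are differentiable on $(0,\infty)$ with concave derivative $\tau'$; one sets $\tau'(0):=\lim_{x\searrow0}\tau'(x)$. $\mathcal S_0^+$ is the set of $\tau\in\mathcal S$ with $\tau(0)=0$ and $\tau'(x)>0$ for all $x>0$. For a real function $g$, $g^{\oplus}$ and $g^{\ominus}$ denote its right and left derivatives; $\tau'^{\oplus}$ is the right derivative of $\tau'$ (it exists on $(0,\infty)$, is nonnegative and nonincreasing). A metric space $(\mathcal Q,d)$ is a Hadamard space if it is complete and for all $y_0,y_1\in\mathcal Q$ there exists $m\in\mathcal Q$ with $\frac12 d(y_0,q)^2+\frac12 d(y_1,q)^2-\frac14 d(y_0,y_1)^2\ge d(q,m)^2$ for all $q\in\mathcal Q$ (equivalently, a complete CAT(0) space). $\mathcal Q$ carries its Borel $\sigma$-algebra and $Y$ is a measurable map from a probability space into $\mathcal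 Q$. *)

From HB Require Import structures.
From mathcomp Require Import all_boot all_order all_algebra.
From mathcomp Require Import all_classical all_reals all_analysis.
Set Implicit Arguments. Unset Strict Implicit. Unset Printing Implicit Defensive.
Import Order.TTheory GRing.Theory Num.Theory.
Import numFieldNormedType.Exports.
Local Open Scope classical_set_scope.
Local Open Scope ring_scope.

Section Defs.
Variable R : realType.

Definition is_metric (Q : Type) (d : Q -> Q -> R) : Prop :=
  (forall x y, 0 <= d x y) /\
  (forall x y, d x y = 0 <-> x = y) /\
  (forall x y, d x y = d y x) /\
  (forall x y z, d x z <= d x y + d y z).

Definition d_cauchy (Q : Type) (d : Q -> Q -> R) (u : nat -> Q) : Prop :=
  forall e : R, 0 < e -> exists N : nat, forall n k : nat,
    (N <= n)%N -> (N <= k)%N -> d (u n) (u k) < e.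

Definition d_converges (Q : Type) (d : Q -> Q -> R) (u : nat -> Q) (l : Q) : Prop :=
  forall e : R, 0 < e -> exists N : nat, forall n : nat, (N <= n)%N -> d (u n) l < e.

Definition d_complete (Q : Type) (d : Q -> Q -> R) : Prop :=
  forall u : nat -> Q, d_cauchy d u -> exists l, d_converges d u l.

Definition hadamard (Q : Type) (d : Q -> Q -> R) : Prop :=
  is_metric d /\ d_complete d /\
  forall y0 y1 : Q, exists m : Q, forall q : Q,
    2^-1 * d y0 q ^+ 2 + 2^-1 * d y1 q ^+ 2 - 4^-1 * d y0 y1 ^+ 2 >= d q m ^+ 2.

Definition d_open (Q : Type) (d : Q -> Q -> R) (A : set Q) : Prop :=
  forall x, A x -> exists2 e : R, 0 < e & (fun y => d x y < e) `<=` A.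

Definition d_borel (Q : Type) (d : Q -> Q -> R) : set (set Q) :=
  <<s d_open d >>.

Definition nonneg_reals : set R := [set x | 0 <= x].
Definition pos_reals : set R := [set x | 0 < x].

Definition tau_deriv (tau : R -> R) (x : R) : R :=
  if 0 < x then derive1 tau x else lim (derive1 tau y @[y --> 0^'+]).

Definition rderiv (g : R -> R) (x : R) : R :=
  lim ((g (x + h) - g x) / h @[h --> 0^'+]).

Definition in_S (tau : R -> R) : Prop :=
  (forall x y, 0 <= x -> x <= y -> tau x <= tau y) /\
  (forall x y t, 0 <= x -> 0 <= y -> 0 <= t <= 1 ->
     tau (t * x + (1 - t) * y) <= t * tau x + (1 - t) * tau y) /\
  (forall x, 0 < x -> derivable tau x 1) /\
  (forall x y t, 0 < x -> 0 < y -> 0 <= t <= 1 ->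
     t * derive1 tau x + (1 - t) * derive1 tau y <= derive1 tau (t * x + (1 - t) * y)).

Definition in_S0plus (tau : R -> R) : Prop :=
  in_S tau /\ tau 0 = 0 /\ (forall x, 0 < x -> 0 < tau_deriv tau x).

End Defs.

From HB Require Import structures.
From mathcomp Require Import all_boot all_order all_algebra.
From mathcomp Require Import all_classical all_reals all_analysis.
From mathcomp Require Import ring lra.
From mathcomp Require Import measurable_realfun.
Import Order.TTheory GRing.Theory Num.Theory.
Import numFieldNormedType.Exports.
Local Open Scope classical_set_scope.
Local Open Scope ring_scope.

Set Implicit Arguments. Unset Strict Implicit.

(* For t = 2^-k, iterating the midpoint inequality between m and q yields a point c_t with
   d(y, c_t)^2 <= (1 - t) d(y, m)^2 + t d(y, q)^2 - t (1 - t) d(q, m)^2 for every y.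
   As tau' is concave, phi = tau - (tau'^+(M) / 2) x^2 is nondecreasing and convex on [0, M];
   with M = max(d(y, m), d(y, q)) this turns the quadratic inequality into
   tau(d(y, c_t)) - tau(d(y, m))
     <= t (tau(d(y, q)) - tau(d(y, m))) - t (1 - t) (d(q, m)^2 / 2) tau'^+(M).
   Integrating, the minimality of m makes the left-hand side nonnegative; divide by t and
   let t -> 0. All integrands are integrable because tau'(d(Y, o)) is. *)

Lemma le_interp_of_sqr_le (R : realFieldType) (a b c D t : R) :
  0 <= a -> 0 <= b -> 0 <= c -> `|a - b| <= D -> 0 <= t <= 1 ->
  c ^+ 2 <= (1 - t) * a ^+ 2 + t * b ^+ 2 - t * (1 - t) * D ^+ 2 ->
  c <= (1 - t) * a + t * b.
Proof.
move=> a0 b0 c0 abD /andP[t0 t1] cD.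
have ab2 : (a - b) ^+ 2 <= D ^+ 2.
  by rewrite -real_normK ?num_real // lerXn2r // ?nnegrE // (le_trans _ abD).
rewrite -ler_sqr ?nnegrE //; last by rewrite addr_ge0 // mulr_ge0 //; lra.
apply: le_trans cD _.
have -> : ((1 - t) * a + t * b) ^+ 2 =
  (1 - t) * a ^+ 2 + t * b ^+ 2 - t * (1 - t) * (a - b) ^+ 2 by ring.
have : t * (1 - t) * (a - b) ^+ 2 <= t * (1 - t) * D ^+ 2.
  by apply: ler_wpM2l => //; rewrite mulr_ge0 //; lra.
lra.
Qed.

Section TauDerivative.
Variables (R : realType) (tau : R -> R).
Hypothesis tauS : in_S0plus tau.

Local Notation tau' := (derive1 tau).
Local Notation tau'' := (rderiv (tau_deriv tau)).
Local Notation pos := ([set` Interval (BRight (0 : R)) (BInfty R false)]).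

Lemma derive_chord x y z : 0 < x -> x < y -> y < z ->
  (z - y) * tau' x + (y - x) * tau' z <= (z - x) * tau' y.
Proof.
move=> x0 xy yz; have [[_ [_ [_ concave]]] _] := tauS.
set t := (z - y) / (z - x).
have zx : 0 < z - x by lra.
have t01 : 0 <= t <= 1.
  apply/andP; split; first by rewrite /t divr_ge0 //; lra.
  by rewrite /t ler_pdivrMr // mul1r; lra.
have := concave x z t x0 (lt_trans x0 (lt_trans xy yz)) t01.
have -> : t * x + (1 - t) * z = y by rewrite /t; field; lra.
have e1 : t * (z - x) = z - y by rewrite /t divfK //; lra.
have e2 : y - x = (1 - t) * (z - x) by rewrite mulrBl mul1r e1; lra.
rewrite -e1 e2 => concave_y.
have -> : t * (z - x) * tau' x + (1 - t) * (z - x) * tau' z =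
   (z - x) * (t * tau' x + (1 - t) * tau' z) by ring.
by rewrite ler_wpM2l //; lra.
Qed.

Lemma tau_derivE x : 0 < x -> tau_deriv tau x = tau' x.
Proof. by move=> x0; rewrite /tau_deriv x0. Qed.

Lemma derive_gt0 x : 0 < x -> 0 < tau' x.
Proof. by move=> x0; have [_ [_ H]] := tauS; rewrite -tau_derivE // H. Qed.

(* A concave function that decreases on [x, y] becomes negative beyond y. *)
Lemma derive_nondecreasing x y : 0 < x -> x <= y -> tau' x <= tau' y.
Proof.
move=> x0; rewrite le_eqVlt => /predU1P[<-//|xy].
rewrite leNgt; apply/negP => yx.
set del := tau' x - tau' y.
have del0 : 0 < del by rewrite /del; lra.
have y0 := derive_gt0 (lt_trans x0 xy).
set z := y + ((y - x) * tau' y / del + 1).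
have w0 : 0 <= (y - x) * tau' y / del by rewrite divr_ge0 // ?mulr_ge0 //; lra.
have yz : y < z by rewrite /z; lra.
have chord := derive_chord x0 xy yz.
have z0 := derive_gt0 (lt_trans (lt_trans x0 xy) yz).
have ez : (z - y) * del = (y - x) * tau' y + del by rewrite /z; field; lra.
have : 0 <= (y - x) * tau' z by rewrite mulr_ge0 //; lra.
have : (z - x) * tau' y = (z - y) * tau' y + (y - x) * tau' y by ring.
have : (z - y) * del = (z - y) * tau' x - (z - y) * tau' y by rewrite /del; ring.
lra.
Qed.

Lemma derive_le_double x y : 0 < x -> x <= y -> x * tau' y <= 2 * y * tau' x.
Proof.
move=> x0; rewrite le_eqVlt => /predU1P[<-|xy]; first by have := derive_gt0 x0; nra.
have x20 : 0 < x / 2 by lra.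
have := derive_chord x20 (ltac:(lra) : x / 2 < x) xy.
have := derive_gt0 x20; have := derive_gt0 x0; have := derive_gt0 (lt_trans x0 xy).
nra.
Qed.

Let slope a b := (tau' b - tau' a) / (b - a).

Lemma slope_antitone a b c e : 0 < a -> a < b -> c < e -> a <= c -> b <= e ->
  slope c e <= slope a b.
Proof.
move=> a0 ab ce ac be.
have slope_le_right b' c' : a < b' -> b' < c' -> slope a c' <= slope a b'.
  move=> ab' b'c'; have := derive_chord a0 ab' b'c'.
  rewrite /slope ler_pdivrMr; last lra.
  by rewrite mulrAC ler_pdivlMr; [nra | lra].
have slope_le_left a' : a < a' -> a' < e -> slope a' e <= slope a e.
  move=> aa' a'e; have := derive_chord a0 aa' a'e.
  rewrite /slope ler_pdivrMr; last lra.
  by rewrite mulrAC ler_pdivlMr; [nra | lra].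
apply: (@le_trans _ _ (slope a e)).
  by move: ac; rewrite le_eqVlt => /predU1P[->//|ac]; apply: slope_le_left.
by move: be; rewrite le_eqVlt => /predU1P[->//|be]; apply: slope_le_right.
Qed.

Let right_slopes (x : R) : set R := [set slope x (x + s) | s in pos].

Lemma right_slopes_ubound x p p' : 0 < p -> p < p' -> p' <= x ->
  ubound (right_slopes x) (slope p p').
Proof.
move=> p0 pp' p'x _ [s + <-]; rewrite /= in_itv /= andbT => s0.
by apply: slope_antitone => //; lra.
Qed.

Lemma rderivE x : 0 < x -> tau'' x = sup (right_slopes x).
Proof.
move=> x0; apply: cvg_lim => //.
have near_slope : {near 0^'+, (fun s => slope x (x + s)) =1
    (fun s => (tau_deriv tau (x + s) - tau_deriv tau x) / s)}.
  near=> s; have s0 : 0 < s by near: s; apply: nbhs_right_gt.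
  by rewrite /slope !tau_derivE //; [congr (_ / _); ring | lra].
apply: cvg_trans (near_eq_cvg near_slope) _.
apply: nonincreasing_at_right_cvgr => //.
  move=> s1 s2; rewrite !in_itv /= !andbT => s10 s20 s12.
  by apply: slope_antitone => //; lra.
by exists (slope (x / 2) x); apply: right_slopes_ubound => //; lra.
Unshelve. all: by end_near.
Qed.

Lemma rderiv_ge_slope x s : 0 < x -> 0 < s -> slope x (x + s) <= tau'' x.
Proof.
move=> x0 s0; rewrite rderivE //; apply: ub_le_sup.
  by exists (slope (x / 2) x); apply: right_slopes_ubound => //; lra.
by exists s => //=; rewrite in_itv /= andbT.
Qed.

Lemma rderiv_le_slope x p p' : 0 < p -> p < p' -> p' <= x -> tau'' x <= slope p p'.
Proof.
move=> p0 pp' p'x; rewrite rderivE; last lra.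
apply: ge_sup; last exact: right_slopes_ubound.
by exists (slope x (x + 1)), 1 => //=; rewrite in_itv /= andbT.
Qed.

Lemma rderiv_ge0 x : 0 < x -> 0 <= tau'' x.
Proof.
move=> x0; apply: le_trans (rderiv_ge_slope x0 ltr01).
by rewrite divr_ge0 // ?subr_ge0; [apply: derive_nondecreasing|]; lra.
Qed.

Lemma rderiv_nonincreasing x y : 0 < x -> x <= y -> tau'' y <= tau'' x.
Proof.
move=> x0; rewrite le_eqVlt => /predU1P[->//|xy].
apply: le_trans (rderiv_le_slope x0 xy (lexx _)) _.
by have := rderiv_ge_slope x0 (ltac:(lra) : 0 < y - x); rewrite subrKC.
Qed.

Lemma tau_deriv0E : tau_deriv tau 0 = inf (tau' @` pos).
Proof.
rewrite /tau_deriv ltxx; apply: cvg_lim => //.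
apply: nondecreasing_at_right_cvgr => //.
  by move=> a b; rewrite !in_itv /= !andbT => a0 b0 ab; apply: derive_nondecreasing.
by exists 0 => _ [y /= + <-]; rewrite in_itv /= andbT => y0; apply/ltW/derive_gt0.
Qed.

Lemma tau_deriv_ge0 x : 0 <= x -> 0 <= tau_deriv tau x.
Proof.
rewrite le_eqVlt => /predU1P[<-|x0]; last by rewrite tau_derivE //; apply/ltW/derive_gt0.
rewrite tau_deriv0E; apply: lb_le_inf.
  by exists (tau' 1), 1 => //=; rewrite in_itv /= andbT.
by move=> _ [y /= + <-]; rewrite in_itv /= andbT => y0; apply/ltW/derive_gt0.
Qed.

Lemma tau_deriv_nondecreasing x y : 0 <= x -> x <= y ->
  tau_deriv tau x <= tau_deriv tau y.
Proof.
rewrite le_eqVlt => /predU1P[<-|x0] xy; last first.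
  by rewrite !tau_derivE //; [apply: derive_nondecreasing | apply: lt_le_trans xy].
move: xy; rewrite le_eqVlt => /predU1P[<-//|y0].
rewrite tau_deriv0E tau_derivE //; apply: ge_inf.
  by exists 0 => _ [z /= + <-]; rewrite in_itv /= andbT => z0; apply/ltW/derive_gt0.
by exists y => //=; rewrite in_itv /= andbT.
Qed.

Lemma tau_nondecreasing x y : 0 <= x -> x <= y -> tau x <= tau y.
Proof. by have [[H _] _] := tauS; apply: H. Qed.

Lemma tau_cvg_at_right0 : tau x @[x --> 0^'+] --> tau 0.
Proof.
have [[_ [convex _]] _] := tauS.
set K := tau 1 - tau 0.
have K0 : 0 <= K by rewrite /K subr_ge0; apply: tau_nondecreasing.
apply/cvgrPdist_le => e e0.
set del := Num.min 1 (e / (K + 1)).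
have eK : 0 < e / (K + 1) by rewrite divr_gt0 //; lra.
have del0 : 0 < del by rewrite /del lt_min ltr01 eK.
near=> x.
have x0 : 0 < x by near: x; apply: nbhs_right_gt.
have xdel : x <= del by near: x; apply: nbhs_right_le.
have x1 : x <= 1 by apply: le_trans xdel _; rewrite /del ge_min lexx.
have xe : x <= e / (K + 1) by apply: le_trans xdel _; rewrite /del ge_min lexx orbT.
have := convex 1 0 x ler01 (lexx 0) (ltac:(apply/andP; split; lra)).
rewrite mulr0 addr0 mulr1 => chord.
have tau0x := tau_nondecreasing (lexx 0) (ltW x0).
have xKe : x * (K + 1) <= e by rewrite -ler_pdivlMr //; lra.
have : tau x - tau 0 <= x * K by rewrite /K; lra.
rewrite distrC ger0_norm; nra.
Unshelve. all: by end_near.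
Qed.

Lemma tau_continuous_within u v : 0 <= u -> u < v -> {within `[u, v], continuous tau}.
Proof.
have tau_cont x : 0 < x -> {for x, continuous tau}.
  have [[_ [_ [derivable_tau _]]] _] := tauS.
  by move=> x0; apply/differentiable_continuous/derivable1_diffP/derivable_tau.
move=> u0 uv; apply/continuous_within_itvP => //; split.
- by move=> x; rewrite in_itv /= => /andP[ux xv]; apply: tau_cont; lra.
- move: u0 uv; rewrite le_eqVlt => /predU1P[<-|u0] uv; first exact: tau_cvg_at_right0.
  exact/cvg_at_right_filter/tau_cont.
- by apply/cvg_at_left_filter/tau_cont; lra.
Qed.

Lemma MVT_tau_sub_sqr k u v : 0 <= u -> u < v -> exists2 c, u < c < v &
  (tau v - k * (v * v)) - (tau u - k * (u * u)) = (tau' c - k * (c + c)) * (v - u).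
Proof.
move=> u0 uv.
pose F x := tau x - k * (x * x).
have dF x : x \in `]u, v[ -> is_derive x 1 F (tau' x - k * (x + x)).
  rewrite in_itv /= => /andP[ux xv].
  have [[_ [_ [derivable_tau _]]] _] := tauS.
  have dtau : is_derive x 1 tau (tau' x).
    by rewrite derive1E; apply/derivableP/derivable_tau; lra.
  have := is_deriveB dtau (is_deriveZ k (is_deriveM (is_derive_id x 1) (is_derive_id x 1))).
  by rewrite /GRing.scale /= !mulr1.
have cF : {within `[u, v], continuous F}.
  have csqr : {within `[u, v], continuous (fun y : R => k * (y * y))}.
    apply: continuous_subspaceT => y.
    by apply: cvgM; [exact: cvg_cst | apply: cvgM; apply: cvg_id].
  have ctau := tau_continuous_within u0 uv.
  by move=> x; have := continuousB (ctau x) (csqr x).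
have [c] := MVT uv dF cF.
by rewrite in_itv /= => cuv E; exists c.
Qed.

Lemma MVT_tau u v : 0 <= u -> u < v ->
  exists2 c, u < c < v & tau v - tau u = tau' c * (v - u).
Proof.
move=> u0 uv; have [c cuv] := MVT_tau_sub_sqr 0 u0 uv.
by rewrite !mul0r !subr0 => E; exists c.
Qed.

Lemma derive_shift_le u r : 0 <= u -> 0 < r ->
  tau' (u + r) <= 4 * tau_deriv tau u + tau' (2 * r).
Proof.
move=> u0 r0; have [ru|ur] := leP r u.
  have u0' : 0 < u by lra.
  have := derive_le_double u0' (ltac:(lra) : u <= u + r).
  rewrite tau_derivE //; have := derive_gt0 (ltac:(lra) : 0 < 2 * r).
  have := derive_gt0 u0'.
  nra.
have := tau_deriv_ge0 u0.
have := derive_nondecreasing (ltac:(lra) : 0 < u + r) (ltac:(lra) : u + r <= 2 * r).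
lra.
Qed.

(* A local Lipschitz bound whose constant is integrable as soon as [tau'(u)] is. *)
Lemma tau_lipschitz u v r : 0 <= u -> 0 <= v -> `|v - u| <= r ->
  `|tau v - tau u| <= r * (4 * tau_deriv tau u + tau' (2 * r)).
Proof.
move=> u0 v0 uvr.
have r0 : 0 <= r by apply: le_trans uvr.
have tdu := tau_deriv_ge0 u0.
case: (ltgtP u v) => [uv|vu|<-]; last first.
- rewrite subrr normr0; move: r0; rewrite le_eqVlt => /predU1P[<-|rp].
    by rewrite mul0r.
  by have := derive_gt0 (ltac:(lra) : 0 < 2 * r); rewrite pmulr_rge0 //; lra.
- rewrite distrC; have [c /andP[vc cu] ->] := MVT_tau v0 vu.
  have ur : u - v <= r by move: uvr; rewrite distrC ger0_norm; lra.
  have c0 := derive_gt0 (ltac:(lra) : 0 < c).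
  have r2 := derive_gt0 (ltac:(lra) : 0 < 2 * r).
  have cu' := derive_nondecreasing (ltac:(lra) : 0 < c) (ltW cu).
  rewrite tau_derivE in tdu *; last lra.
  rewrite normrM !ger0_norm; nra.
- have [c /andP[uc cv] ->] := MVT_tau u0 uv.
  have vr : v - u <= r by move: uvr; rewrite ger0_norm; lra.
  have c0 := derive_gt0 (ltac:(lra) : 0 < c).
  have cur := derive_nondecreasing (ltac:(lra) : 0 < c) (ltac:(lra) : c <= u + r).
  have shift := derive_shift_le u0 (ltac:(lra) : 0 < r).
  rewrite normrM !ger0_norm; nra.
Qed.


Section Phi.
Variable M : R.
Local Notation h := (tau'' M).
Let phi x := tau x - h / 2 * (x * x).

Lemma derive_sub_linear_nondecreasing x y : 0 < x -> x < y -> y <= M ->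
  tau' x - h * x <= tau' y - h * y.
Proof.
move=> x0 xy yM; have := rderiv_le_slope x0 xy yM.
by rewrite ler_pdivlMr; lra.
Qed.

Lemma rderiv_mul_le_derive x : 0 < x -> x <= M -> h * x <= tau' x.
Proof.
move=> x0 xM; have := derive_gt0 x0 => tx0.
have [h0|h0] := leP h 0; first nra.
apply/ler_addgt0Pr => e e0.
set eps := Num.min (x / 2) (e / h).
have eh : 0 < e / h by rewrite divr_gt0.
have eps0 : 0 < eps by rewrite /eps lt_min eh andbT; lra.
have epsx : eps <= x / 2 by rewrite /eps ge_min lexx.
have epse : h * eps <= e.
  by rewrite mulrC -ler_pdivlMr // /eps ge_min lexx orbT.
have := derive_sub_linear_nondecreasing eps0 (ltac:(lra) : eps < x) xM.
have := derive_gt0 eps0.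
nra.
Qed.

Lemma MVT_phi u v : 0 <= u -> u < v -> v <= M ->
  exists2 c, u < c < v & phi v - phi u = (tau' c - h * c) * (v - u).
Proof.
move=> u0 uv vM; have [c cuv E] := MVT_tau_sub_sqr (h / 2) u0 uv.
by exists c => //; rewrite /phi E; congr (_ * _); field.
Qed.

Lemma phi_nondecreasing u v : 0 <= u -> u <= v -> v <= M -> phi u <= phi v.
Proof.
move=> u0; rewrite le_eqVlt => /predU1P[->//|uv] vM.
have [c /andP[uc cv] E] := MVT_phi u0 uv vM.
have := rderiv_mul_le_derive (ltac:(lra) : 0 < c) (ltac:(lra) : c <= M).
rewrite -subr_ge0 -(subr_ge0 (phi u)) E => hc.
by apply: mulr_ge0 => //; lra.
Qed.

Lemma phi_convex_lt u v s : 0 <= u -> u < v -> v <= M -> 0 < s < 1 ->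
  phi ((1 - s) * u + s * v) <= (1 - s) * phi u + s * phi v.
Proof.
move=> u0 uv vM /andP[s0 s1].
set w := (1 - s) * u + s * v.
have uw : u < w by rewrite /w; nra.
have wv : w < v by rewrite /w; nra.
have [c1 /andP[uc1 c1w] E1] := MVT_phi u0 uw (ltac:(lra) : w <= M).
have [c2 /andP[wc2 c2v] E2] := MVT_phi (ltac:(lra) : 0 <= w) wv vM.
have slopes := derive_sub_linear_nondecreasing (ltac:(lra) : 0 < c1)
  (ltac:(lra) : c1 < c2) (ltac:(lra) : c2 <= M).
have ewu : w - u = s * (v - u) by rewrite /w; ring.
have evw : v - w = (1 - s) * (v - u) by rewrite /w; ring.
rewrite ewu in E1; rewrite evw in E2.
have : (1 - s) * (phi w - phi u) <= s * (phi v - phi w).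
  rewrite E1 E2.
  have -> : (1 - s) * ((tau' c1 - h * c1) * (s * (v - u))) =
     (s * (1 - s) * (v - u)) * (tau' c1 - h * c1) by ring.
  have -> : s * ((tau' c2 - h * c2) * ((1 - s) * (v - u))) =
     (s * (1 - s) * (v - u)) * (tau' c2 - h * c2) by ring.
  by apply: ler_wpM2l => //; apply: mulr_ge0; [apply: mulr_ge0|]; lra.
lra.
Qed.

Lemma phi_convex a b t : 0 <= a -> 0 <= b -> a <= M -> b <= M -> 0 < t < 1 ->
  phi ((1 - t) * a + t * b) <= (1 - t) * phi a + t * phi b.
Proof.
move=> a0 b0 aM bM t01; case: (ltgtP a b) => [ab|ba|<-].
- exact: phi_convex_lt.
- have := phi_convex_lt b0 ba aM (ltac:(move: t01 => /andP[? ?]; apply/andP; split; lra)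
    : 0 < 1 - t < 1).
  have -> : 1 - (1 - t) = t by ring.
  by rewrite addrC [t * _ + _]addrC.
- by rewrite -mulrDl subrK mul1r -mulrDl subrK mul1r.
Qed.

End Phi.

(* c <= (1 - t) a + t b, and monotonicity and convexity of phi for M = max a b carry
   the quadratic defect t (1 - t) D^2 over to tau. *)
Lemma tau_interp_gap a b c D t : 0 <= a -> 0 <= b -> 0 <= c ->
  `|a - b| <= D -> D <= a + b -> 0 < D -> 0 < t < 1 ->
  c ^+ 2 <= (1 - t) * a ^+ 2 + t * b ^+ 2 - t * (1 - t) * D ^+ 2 ->
  tau c - tau a <= t * (tau b - tau a) - t * (1 - t) * (D ^+ 2 / 2) * tau'' (Num.max a b).
Proof.
move=> a0 b0 c0 abD Dab D0 t01 cD; have /andP[t0 t1] := t01.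
set M := Num.max a b.
have aM : a <= M by rewrite /M le_max lexx.
have bM : b <= M by rewrite /M le_max lexx orbT.
have M0 : 0 < M by lra.
have h0 := rderiv_ge0 M0.
have cx := le_interp_of_sqr_le a0 b0 c0 abD (ltac:(apply/andP; split; lra) : 0 <= t <= 1) cD.
have xM : (1 - t) * a + t * b <= M.
  have : (1 - t) * a <= (1 - t) * M by apply: ler_wpM2l; lra.
  have : t * b <= t * M by apply: ler_wpM2l; lra.
  lra.
have Pm := phi_nondecreasing (M := M) c0 cx xM.
have Pc := phi_convex (M := M) a0 b0 aM bM t01.
set h := tau'' M in h0 Pm Pc *.
have Hh := ler_wpM2l (ltac:(lra) : 0 <= h / 2) cD.
rewrite !expr2 in Hh *.
lra.
Qed.

End TauDerivative.

(* The point for 2^-(k+1) is a midpoint of m and the point for 2^-k. *)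
Lemma hadamard_dyadic_point (R : realType) (Q : Type) (d : Q -> Q -> R) (m q : Q) (k : nat) :
  hadamard d -> exists c : Q, forall y : Q,
  d y c ^+ 2 <= (1 - (2^-1) ^+ k) * d y m ^+ 2 + (2^-1) ^+ k * d y q ^+ 2
     - (2^-1) ^+ k * (1 - (2^-1) ^+ k) * d q m ^+ 2.
Proof.
move=> [[d0 [deq [dsym dtri]]] [_ midpoint]].
elim: k => [|k [c Hc]].
  by exists q => y; rewrite expr0 subrr mul0r mul1r add0r mulr0 mul0r subr0.
set t : R := (2^-1) ^+ k.
have t0 : 0 < t by rewrite /t exprn_gt0 // invr_gt0.
have t1 : t <= 1 by rewrite /t exprn_ile1 // ?invr_ge0 ?invf_le1 //; lra.
set D := d q m.
have D0 : 0 <= D := d0 _ _.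
have dqc : d q c <= (1 - t) * D.
  have := Hc q; have -> : d q q = 0 by apply/deq.
  rewrite expr0n /= mulr0 addr0 -/D -/t => Hq.
  rewrite -ler_sqr ?nnegrE //; last by apply: mulr_ge0 => //; lra.
  by have -> : ((1 - t) * D) ^+ 2 = (1 - t) * D ^+ 2 - t * (1 - t) * D ^+ 2 by ring.
have dmc : t * D <= d m c by have := dtri q c m; rewrite -/D (dsym c m); lra.
have dmc2 : (t * D) ^+ 2 <= d m c ^+ 2.
  by rewrite ler_sqr ?nnegrE //; apply: mulr_ge0 => //; lra.
have [c' Hc'] := midpoint m c.
exists c' => y.
have H1 := Hc' y; have H2 := Hc y.
rewrite (dsym m y) in H1.
have -> : (2^-1 : R) ^+ k.+1 = 2^-1 * t by rewrite exprS.
set a := d y m in H1 H2 *; set b := d y q in H2 *.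
rewrite -/D -/t in H2.
have <- : 2^-1 * a ^+ 2 + 2^-1 * ((1 - t) * a ^+ 2 + t * b ^+ 2 - t * (1 - t) * D ^+ 2)
     - 4^-1 * (t * D) ^+ 2 =
   (1 - 2^-1 * t) * a ^+ 2 + 2^-1 * t * b ^+ 2 - 2^-1 * t * (1 - 2^-1 * t) * D ^+ 2.
  by field.
have : 4^-1 * (t * D) ^+ 2 <= 4^-1 * d m c ^+ 2 by apply: ler_wpM2l => //; lra.
have : 2^-1 * d c y ^+ 2 <= 2^-1 * ((1 - t) * a ^+ 2 + t * b ^+ 2 - t * (1 - t) * D ^+ 2).
  by apply: ler_wpM2l => //; rewrite (dsym c y); lra.
lra.
Qed.

Lemma hadamard_tau_dyadic_gap (R : realType) (Q : Type) (d : Q -> Q -> R) (tau : R -> R)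
    (m q : Q) (k : nat) : hadamard d -> in_S0plus tau -> q <> m ->
  exists c : Q, forall y : Q,
  tau (d y c) - tau (d y m) <= (2^-1) ^+ k.+1 * (tau (d y q) - tau (d y m))
    - (2^-1) ^+ k.+1 * (1 - (2^-1) ^+ k.+1) * (d q m ^+ 2 / 2)
      * rderiv (tau_deriv tau) (Num.max (d y m) (d y q)).
Proof.
move=> dH tauS qm; have [d0 [deq [dsym dtri]]] := dH.1.
have [c Hc] := hadamard_dyadic_point m q k.+1 dH.
exists c => y; set t : R := (2^-1) ^+ k.+1.
have t0 : 0 < t by rewrite /t exprn_gt0 // invr_gt0.
have t1 : t < 1 by rewrite /t exprn_ilt1 // ?invr_ge0 ?invf_lt1 //; lra.
have D0 : 0 < d q m by rewrite lt_neqAle d0 andbT; apply/eqP => /esym /deq.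
apply: (tau_interp_gap tauS (d0 _ _) (d0 _ _) (d0 _ _) _ _ D0 _ (Hc y)).
- rewrite ler_norml; have := dtri y q m; have := dtri y m q; rewrite (dsym m q); lra.
- by rewrite addrC (dsym y q); apply: dtri.
- by apply/andP.
Qed.

Lemma le_of_dyadic_lower_bounds (R : realType) (K X : R) : 0 <= K ->
  (forall k : nat, (1 - (2^-1) ^+ k.+1) * K <= X) -> K <= X.
Proof.
move=> K0 H; apply/ler_addgt0Pr => e e0.
have := archi_boundP (divr_ge0 K0 (ltW e0)); set n := Num.bound (K / e) => Kn.
have n2 : (n%:R : R) < 2 ^+ n by rewrite -natrX ltr_nat ltn_expl.
have t0 : (0 : R) < 2 ^+ n by rewrite exprn_gt0.
have tn : (2^-1 : R) ^+ n.+1 <= (2 ^+ n)^-1.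
  rewrite exprS exprVn; have : (0 : R) <= (2 ^+ n)^-1 by rewrite invr_ge0 ltW.
  lra.
have : K <= 2 ^+ n * e by rewrite -ler_pdivrMr //; lra.
rewrite -ler_pdivrMl // => Ke.
have : (2^-1 : R) ^+ n.+1 * K <= (2 ^+ n)^-1 * K by apply: ler_wpM2r.
have := H n; rewrite mulrBl mul1r.
lra.
Qed.

Lemma integral_EFin_Rintegral (R : realType) (dO : measure_display)
    (T : measurableType dO) (mu : {measure set T -> \bar R}) (f : T -> R) :
  mu.-integrable setT (EFin \o f) -> (\int[mu]_x (f x)%:E = (\int[mu]_x f x)%:E)%E.
Proof. by move=> hf; rewrite /Rintegral fineK //; exact: integrable_fin_num. Qed.

Lemma measurable_comp_nondecreasing (R : realType) (dO : measure_display)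
    (T : measurableType dO) (g : T -> R) (phi : R -> R) (a : R) :
  (forall x y, a <= x -> x <= y -> phi x <= phi y) ->
  measurable_fun setT g -> (forall w, a <= g w) -> measurable_fun setT (phi \o g).
Proof.
move=> phi_nd mg ga.
have -> : phi \o g = (fun x => phi (Num.max x a)) \o g.
  by apply/funext => w /=; rewrite max_l.
apply: measurableT_comp => //; apply: nondecreasing_measurable => // x y xy.
by apply: phi_nd; [rewrite le_max lexx orbT | apply: le_max2].
Qed.

Section Measurability.
Variables (R : realType) (Q : Type) (d : Q -> Q -> R)
  (dO : measure_display) (Omega : measurableType dO) (Y : Omega -> Q).
Hypothesis dmetric : is_metric d.
Hypothesis Ymeas : forall B, d_borel d B -> measurable (Y @^-1` B).

Lemma measurable_dist (q : Q) : measurable_fun setT (fun w => d (Y w) q).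
Proof.
have [d0 [deq [dsym dtri]]] := dmetric.
apply: (measurability (@RGenOInfty.G R)) => [|/= _ [_] [x] -> <-].
  exact: RGenOInfty.measurableE.
rewrite setTI.
have -> : (fun w => d (Y w) q) @^-1` `]x, +oo[ = Y @^-1` [set y | x < d y q].
  by apply/seteqP; split => w /=; rewrite in_itv /= andbT.
apply: Ymeas; apply: sub_sigma_algebra => y /= xy.
exists (d y q - x); first by rewrite subr_gt0.
by move=> z /= yz; have := dtri y z q; rewrite (dsym y z) in yz *; lra.
Qed.

End Measurability.

Section EFinIntegrable.
Variables (R : realType) (dO : measure_display) (T : measurableType dO)
  (mu : {measure set T -> \bar R}) (D : set T).
Hypothesis mD : measurable D.
Implicit Types f g : T -> R.

Lemma EFin_integrableD f g : mu.-integrable D (EFin \o f) ->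
  mu.-integrable D (EFin \o g) -> mu.-integrable D (EFin \o (fun x => f x + g x)).
Proof. exact: integrableD. Qed.

Lemma EFin_integrableB f g : mu.-integrable D (EFin \o f) ->
  mu.-integrable D (EFin \o g) -> mu.-integrable D (EFin \o (fun x => f x - g x)).
Proof. exact: integrableB. Qed.

Lemma EFin_integrableZl (k : R) f : mu.-integrable D (EFin \o f) ->
  mu.-integrable D (EFin \o (fun x => k * f x)).
Proof. exact: integrableZl. Qed.

End EFinIntegrable.

Section Excess.
Variables (R : realType) (Q : Type) (d : Q -> Q -> R)
  (dO : measure_display) (Omega : measurableType dO) (P : probability Omega R)
  (Y : Omega -> Q) (tau : R -> R) (o : Q).
Hypothesis dmetric : is_metric d.
Hypothesis Ymeas : forall B, d_borel d B -> measurable (Y @^-1` B).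
Hypothesis tauS : in_S0plus tau.
Hypothesis tau'_dist_o_int : (\int[P]_w (tau_deriv tau (d (Y w) o))%:E < +oo)%E.

Let excess q' w := tau (d (Y w) q') - tau (d (Y w) o).

Lemma measurable_excess q' : measurable_fun setT (excess q').
Proof.
have [d0 _] := dmetric.
by apply: measurable_funB; apply: (measurable_comp_nondecreasing (tau_nondecreasing tauS))
  => //; apply: measurable_dist.
Qed.

Lemma integrable_tau_deriv_dist_o :
  P.-integrable setT (EFin \o (fun w => tau_deriv tau (d (Y w) o))).
Proof.
have [d0 _] := dmetric.
apply/integrableP; split.
  apply/measurable_EFinP.
  apply: (measurable_comp_nondecreasing (tau_deriv_nondecreasing tauS)) => //.
  exact: measurable_dist.
apply: le_lt_trans tau'_dist_o_int; rewrite le_eqVlt; apply/orP; left; apply/eqP.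
by apply: eq_integral => w _ /=; rewrite ger0_norm // tau_deriv_ge0.
Qed.

Lemma integrable_excess q' : P.-integrable setT (EFin \o excess q').
Proof.
have [d0 [_ [dsym dtri]]] := dmetric.
set r := d q' o.
pose G w := r * (4 * tau_deriv tau (d (Y w) o) + derive1 tau (2 * r)).
have iG : P.-integrable setT (EFin \o G).
  apply/EFin_integrableZl/EFin_integrableD => //.
    exact/EFin_integrableZl/integrable_tau_deriv_dist_o.
  exact: finite_measure_integrable_cst.
apply: (le_integrable measurableT _ _ iG); first exact/measurable_EFinP/measurable_excess.
move=> w _ /=; rewrite lee_fin; apply: le_trans (ler_norm _).
apply: tau_lipschitz => //; rewrite ler_norml.
have := dtri (Y w) q' o; have := dtri (Y w) o q'; rewrite (dsym o q') -/r; lra.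
Qed.

Variables (m q : Q).
Hypothesis qm : q <> m.

Let rderiv_max w := rderiv (tau_deriv tau) (Num.max (d (Y w) m) (d (Y w) q)).

Lemma dist_gt0 : 0 < d q m.
Proof.
have [d0 [deq _]] := dmetric.
by rewrite lt_neqAle d0 andbT; apply/eqP => /esym /deq.
Qed.

Lemma half_dist_le_max w : d q m / 2 <= Num.max (d (Y w) m) (d (Y w) q).
Proof.
have [_ [_ [dsym dtri]]] := dmetric.
have := dtri q (Y w) m; rewrite (dsym q (Y w)).
by case: (leP (d (Y w) m) (d (Y w) q)); lra.
Qed.

Lemma rderiv_max_ge0 w : 0 <= rderiv_max w.
Proof.
apply: rderiv_ge0 => //; apply: lt_le_trans (half_dist_le_max w).
by have := dist_gt0; lra.
Qed.

Lemma measurable_rderiv_max : measurable_fun setT rderiv_max.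
Proof.
have -> : rderiv_max = \- ((fun x => - rderiv (tau_deriv tau) x) \o
    (fun w => Num.max (d (Y w) m) (d (Y w) q))).
  by apply/funext => w /=; rewrite opprK.
apply/measurable_funN/(measurable_comp_nondecreasing _ _ half_dist_le_max).
  move=> x y Dx xy; rewrite lerN2; apply: rderiv_nonincreasing => //.
  by apply: lt_le_trans Dx; have := dist_gt0; lra.
by apply: measurable_maxr; apply: measurable_dist.
Qed.

Hypothesis dH : hadamard d.

Lemma excess_dyadic_gap k : exists c, forall w,
  excess c w - excess m w + (2^-1) ^+ k.+1 * (1 - (2^-1) ^+ k.+1) * (d q m ^+ 2 / 2)
    * rderiv_max w <= (2^-1) ^+ k.+1 * (excess q w - excess m w).
Proof.
have [c Hc] := hadamard_tau_dyadic_gap k dH tauS qm.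
by exists c => w; have := Hc (Y w); rewrite /excess /rderiv_max; lra.
Qed.

Lemma integrable_rderiv_max : P.-integrable setT (EFin \o rderiv_max).
Proof.
have [c Hc] := excess_dyadic_gap 0.
set t : R := (2^-1) ^+ 1 in Hc.
have t0 : 0 < t by rewrite /t expr1 invr_gt0.
have t1 : t < 1 by rewrite /t expr1 invf_lt1; lra.
set K := t * (1 - t) * (d q m ^+ 2 / 2) in Hc.
have K0 : 0 < K.
  by rewrite /K !mulr_gt0 ?divr_gt0 ?exprn_gt0 ?dist_gt0 //; lra.
pose g w := K^-1 * (t * (excess q w - excess m w) - (excess c w - excess m w)).
have iq := integrable_excess q; have im := integrable_excess m.
have ic := integrable_excess c.
have ig : P.-integrable setT (EFin \o g).
  apply: EFin_integrableZl => //; apply: EFin_integrableB => //.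
    by apply: EFin_integrableZl => //; exact: EFin_integrableB.
  exact: EFin_integrableB.
apply: (le_integrable measurableT _ _ ig).
  exact/measurable_EFinP/measurable_rderiv_max.
move=> w _ /=; rewrite lee_fin ger0_norm ?rderiv_max_ge0 //; apply: le_trans (ler_norm _).
by rewrite /g ler_pdivlMl //; have := Hc w; lra.
Qed.

Hypothesis m_min : forall q' : Q,
  (\int[P]_w (excess m w)%:E <= \int[P]_w (excess q' w)%:E)%E.

Lemma Rintegral_dyadic_bound k :
  (1 - (2^-1) ^+ k.+1) * (d q m ^+ 2 / 2 * \int[P]_w rderiv_max w) <=
  \int[P]_w excess q w - \int[P]_w excess m w.
Proof.
have [c Hc] := excess_dyadic_gap k.
set t : R := (2^-1) ^+ k.+1 in Hc *.
have t0 : 0 < t by rewrite /t exprn_gt0 // invr_gt0.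
have iq := integrable_excess q; have im := integrable_excess m.
have ic := integrable_excess c; have iH := integrable_rderiv_max.
set K := t * (1 - t) * (d q m ^+ 2 / 2) in Hc *.
have iL : P.-integrable setT
    (EFin \o (fun w => excess c w - excess m w + K * rderiv_max w)).
  by apply/EFin_integrableD/EFin_integrableZl => //; apply: EFin_integrableB.
have iR : P.-integrable setT (EFin \o (fun w => t * (excess q w - excess m w))).
  by apply/EFin_integrableZl/EFin_integrableB.
have := le_Rintegral measurableT iL iR (fun w _ => Hc w).
rewrite (RintegralD measurableT (EFin_integrableB measurableT ic im)
  (EFin_integrableZl measurableT K iH)).
rewrite (RintegralZl K measurableT iH).
rewrite (RintegralZl t measurableT (EFin_integrableB measurableT iq im)).
rewrite (RintegralB measurableT ic im) (RintegralB measurableT iq im) /K.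
have := m_min c; rewrite !integral_EFin_Rintegral // lee_fin.
set X := d q m ^+ 2 / 2; set I := \int[P]_w rderiv_max w.
move=> c_min gap; rewrite -(ler_pM2l t0).
have -> : t * ((1 - t) * (X * I)) = t * (1 - t) * X * I by ring.
lra.
Qed.

End Excess.

Theorem mainTheorem1 (R : realType) (Q : Type) (d : Q -> Q -> R)
  (dO : measure_display) (Omega : measurableType dO) (P : probability Omega R)
  (Y : Omega -> Q) (o m q : Q) (tau : R -> R) :
  hadamard d ->
  (forall B, d_borel d B -> measurable (Y @^-1` B)) ->
  in_S0plus tau ->
  (\int[P]_w (tau_deriv tau (d (Y w) o))%:E < +oo)%E ->
  (forall q' : Q,
     (\int[P]_w (tau (d (Y w) m) - tau (d (Y w) o))%:E
      <= \int[P]_w (tau (d (Y w) q') - tau (d (Y w) o))%:E)%E) ->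
  q <> m ->
  (((2^-1 * d q m ^+ 2)%:E
      * \int[P]_w (rderiv (tau_deriv tau) (Num.max (d (Y w) m) (d (Y w) q)))%:E)
   <= \int[P]_w (tau (d (Y w) q) - tau (d (Y w) m))%:E)%E.
Proof.
move=> dH Ymeas tauS tau'_int m_min qm.
have iq := integrable_excess dH.1 Ymeas tauS tau'_int q.
have im := integrable_excess dH.1 Ymeas tauS tau'_int m.
have iH := integrable_rderiv_max dH.1 Ymeas tauS tau'_int qm dH.
have -> : (\int[P]_w (tau (d (Y w) q) - tau (d (Y w) m))%:E =
    \int[P]_w ((tau (d (Y w) q) - tau (d (Y w) o))
              - (tau (d (Y w) m) - tau (d (Y w) o)))%:E)%E.
  by apply: eq_integral => w _; congr EFin; ring.
rewrite (integral_EFin_Rintegral iH).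
rewrite (integral_EFin_Rintegral (EFin_integrableB measurableT iq im)).
rewrite (RintegralB measurableT iq im) -EFinM lee_fin (mulrC 2^-1).
apply: le_of_dyadic_lower_bounds.
  apply: mulr_ge0; first by rewrite divr_ge0 ?sqr_ge0.
  by apply: Rintegral_ge0 => w _; exact: (rderiv_max_ge0 Y dH.1 tauS qm).
exact: (Rintegral_dyadic_bound dH.1 Ymeas tauS tau'_int qm dH m_min).
Qed.
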